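(* Let $G>0$, $\bar\rho>0$, and let $W$ and $g$ be as in the context. Let $T>0$, $\mu\in\mathbb{R}$, and let $q:[0,T)\to[0,\infty)$ and $\varphi:[0,1]\to[0,\infty)$ be twice differentiable, with $\varphi(0)=\varphi''(0)=0$ and $\varphi'>0$ on $[0,1]$. Define \[ \lambda(R)=\begin{cases}\varphi(R)/R, & R\in(0,1],\\ \varphi'(0), & R=0,\end{cases}\qquad y(R)=\frac{\varphi'(R)}{\lambda(R)},\quad R\in[0,1]. \] Assume that \[ \begin{cases} \displaystyle \frac{\varphi^2}{R^5}\,\partial_R\Big(\frac{R^4}{\varphi}\,g'(y)\Big) + \frac{\varphi}{R^2}\,g(y) = \Big(\frac{4\pi}{3}G\bar\rho + \mu\,\lambda^3\Big)\bar\rho^{-\frac13}\,\varphi,\\[2mm] g'(y(1))=0,\qquad \varphi(1)=1, \end{cases} \] and that $q^2\ddot q=\mu$ on $[0,T)$ with $q(0)=1$. Then $\phi(t,R)=q(t)\varphi(R)$ satisfies \[ \begin{cases} \displaystyle \phi_{tt} - \bar\rho^{\frac13}\Big[\frac{1}{R^2\phi}\,\partial_R\Big(\frac{R^4}{\phi}\,g'(Y)\Big) + \frac{R}{\phi^2}\,g(Y)\Big] + \frac{4\pi}{3}R^3 G\bar\rho\,\phi^{-2}=0,\\[2mm] g'(Y(t,1))=0, \end{cases} \] where $\Lambda(t,R)=\phi(t,R)/R$ for $R\in(0,1]$, $\Lambda(t,0)=\phi_R(t,0)$, and $Y(t,R)=\phi_R(t,R)/\Lambda(t,R)$.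
   Context: The strain-energy function $W:GL_+(3,\mathbb{R})\to\mathbb{R}$ is continuously differentiable, objective ($W(OF)=W(F)$) and isotropic ($W(FO)=W(F)$) for all $O\in SO(3,\mathbb{R})$, homogeneous of degree $-1$ ($W(\sigma F)=\sigma^{-1}W(F)$ for $\sigma>0$), and normalized by $W(I)=\bar\rho^{1/3}$. For $y>0$ and unit vector $\omega\in\mathbb{S}^2$, $g(y)=\bar\rho^{-1/3}W(I+(y-1)\,\omega\otimes\omega)$, which is independent of $\omega$. The second displayed system is the Lagrangian equation for spherically symmetric flow maps $x(t,X)=\phi(t,|X|)X/|X|$ of a self-gravitating hyperelastic body occupying the unit ball in reference configuration with traction-free boundary. *)

From HB Require Import structures.
From mathcomp Require Import all_boot all_order all_algebra.
From mathcomp Require Import all_classical all_reals all_analysis.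

Set Implicit Arguments.
Unset Strict Implicit.
Unset Printing Implicit Defensive.

Import Order.TTheory GRing.Theory Num.Theory.
Import numFieldNormedType.Exports.
Local Open Scope classical_set_scope.
Local Open Scope ring_scope.

Section Defs.
Variable R : realType.

Definition GLplus3 : set 'M[R]_3 := [set F | 0 < \det F].

Definition SO3 : set 'M[R]_3 := [set O | O^T *m O = 1%:M /\ \det O = 1].

(* continuously differentiable on an (open) set U of matrices: differentiable
   at every point of U, with all directional derivatives continuous on U
   (equivalently, F |-> 'd W F continuous, as the space is finite dimensional) *)
Definition C1_on (U : set 'M[R]_3) (W : 'M[R]_3 -> R) : Prop :=
  (forall F, U F -> differentiable W F) /\
  (forall v : 'M[R]_3, {within U, continuous ('D_v W)}).

(* the fixed unit vector omega = e_1, and omega ⊗ omega = omega omega^T *)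
Definition omega : 'cV[R]_3 := delta_mx 0 0.

Definition gfun (W : 'M[R]_3 -> R) (rho : R) (y : R) : R :=
  rho `^ (- 3^-1) * W (1%:M + (y - 1) *: (omega *m omega^T)).

Definition lam (vphi : R -> R) (r : R) : R :=
  if r == 0 then derive1 vphi 0 else vphi r / r.

Definition yfun (vphi : R -> R) (r : R) : R := derive1 vphi r / lam vphi r.

Definition Phi (q vphi : R -> R) (t r : R) : R := q t * vphi r.

Definition Phi_R (q vphi : R -> R) (t r : R) : R :=
  derive1 (fun s => Phi q vphi t s) r.
Definition Phi_t (q vphi : R -> R) (t r : R) : R :=
  derive1 (fun s => Phi q vphi s r) t.
Definition Phi_tt (q vphi : R -> R) (t r : R) : R :=
  derive1 (fun s => Phi_t q vphi s r) t.

Definition Lam (q vphi : R -> R) (t r : R) : R :=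
  if r == 0 then Phi_R q vphi t 0 else Phi q vphi t r / r.

Definition Yfun (q vphi : R -> R) (t r : R) : R :=
  Phi_R q vphi t r / Lam q vphi t r.

End Defs.

(* Substituting phi(t,R) = q(t) varphi(R) gives Lambda = q lambda and Y = y, so Y
   does not depend on t and every R-derivative in the Lagrangian equation is a power
   of q times the corresponding term of the profile equation; multiplying by q^2
   and using q^2 q'' = mu turns the Lagrangian equation into the profile ODE.
   The one analytic point is that q does not vanish on [0,T): at a zero t0 > 0 we
   get mu = 0, so q' q'' = 0 on ]0,t0[ (at zeros of q >= 0 by Fermat), hence q'^2
   is constant there and vanishes with q'(t0); thus q is constant on [0,t0],
   contradicting q(0) = 1. *)

From HB Require Import structures.
From mathcomp Require Import all_boot all_order all_algebra.
From mathcomp Require Import all_classical all_reals all_analysis.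
From mathcomp Require Import ring.
Import Order.TTheory GRing.Theory Num.Theory.
Import numFieldNormedType.Exports.
Local Open Scope classical_set_scope.
Local Open Scope ring_scope.

(* Unlike [derive1Ml], no derivability is needed: when [f] is not derivable at
   [x], neither is [c * f] for [c != 0], and both derivatives default to [0]. *)
Lemma derive1Ml_any (R : numFieldType) (f : R -> R) (c x : R) :
  derive1 (fun s => c * f s) x = c * derive1 f x.
Proof.
have [->|c0] := eqVneq c 0.
  by rewrite mul0r; under eq_fun do rewrite mul0r; exact: derive1_cst.
have [df|ndf] := pselect (derivable f x 1); first exact: derive1Ml.
have ndcf : ~ derivable (fun s => c * f s) x 1.
  move=> /(derivableZ (k := c^-1)); apply: contra_not ndf.
  suff -> : c^-1 \*: (fun s => c * f s) = f by [].
  by apply/funext => s /=; rewrite /GRing.scale /= mulrA mulVf ?mul1r.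
by rewrite !derive1E /derive (dvgP ndcf) (dvgP ndf) mulr0.
Qed.

Lemma ge0_root_derive1_eq0 (R : realFieldType) (f : R -> R) (a b c : R) :
  {in `]a, b[, forall t, derivable f t 1} -> {in `]a, b[, forall t, 0 <= f t} ->
  c \in `]a, b[ -> f c = 0 -> derive1 f c = 0.
Proof.
move=> df f_ge0 cab fc0; rewrite derive1E.
apply: derive_val; apply: (derive1_at_min _ df cab) => [|t tab].
  by move: cab; rewrite in_itv /= => /andP[ac /(lt_trans ac) /ltW].
by rewrite fc0 f_ge0.
Qed.

Lemma derive1_eq0_cst (R : realType) (f : R -> R) (a b : R) : a <= b ->
  {in `[a, b], forall x, derivable f x 1} ->
  {in `]a, b[, forall x, derive1 f x = 0} -> f b = f a.
Proof.
move=> ab df df0; apply/eqP; rewrite -subr_eq0.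
have f'0 x : x \in `]a, b[ -> is_derive x 1 f 0.
  move=> xab; rewrite -(df0 x xab) derive1E; apply: derivableP; apply: df.
  exact: subset_itv_oo_cc.
have [c _ ->] := MVT_segment ab f'0 (derivable_within_continuous df).
by rewrite mul0r.
Qed.

Section nonvanishing.
Context {R : realType}.
Variables (a b mu : R) (q : R -> R).
Hypothesis q_ge0 : {in `[a, b[, forall t, 0 <= q t}.
Hypothesis q_derivable : {in `[a, b[, forall t, derivable q t 1}.
Hypothesis dq_derivable : {in `[a, b[, forall t, derivable (derive1 q) t 1}.
Hypothesis q_ode : {in `[a, b[, forall t, q t ^+ 2 * derive1n 2 q t = mu}.

Lemma root_derive1_eq0 t : t \in `]a, b[ -> q t = 0 -> derive1 q t = 0.
Proof.
apply: ge0_root_derive1_eq0 => s /subset_itv_oo_co.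
  exact: q_derivable.
exact: q_ge0.
Qed.

Lemma derive1_derive2_eq0 :
  mu = 0 -> {in `]a, b[, forall t, derive1 q t * derive1n 2 q t = 0}.
Proof.
move=> mu0 t tab; have [qt0|qtN0] := eqVneq (q t) 0.
  by rewrite root_derive1_eq0 ?mul0r.
move: (q_ode _ (subset_itv_oo_co tab)); rewrite mu0 => /eqP.
by rewrite mulf_eq0 expf_eq0 (negbTE qtN0) andbF => /eqP ->; rewrite mulr0.
Qed.

Lemma sqr_derive1_cst c d : mu = 0 -> a <= c -> c <= d -> d < b ->
  derive1 q d ^+ 2 = derive1 q c ^+ 2.
Proof.
move=> mu0 ac cd db; rewrite !expr2.
have sub x : x \in `[c, d] -> x \in `[a, b[.
  by rewrite !in_itv /= => /andP[cx xd]; rewrite (le_trans ac cx) (le_lt_trans xd db).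
change ((derive1 q * derive1 q) d = (derive1 q * derive1 q) c).
apply: derive1_eq0_cst cd _ _.
  by move=> x /sub xab; apply: derivableM; apply: dq_derivable.
move=> x xcd; have xab : x \in `]a, b[.
  move: xcd; rewrite !in_itv /= => /andP[cx xd].
  by rewrite (le_lt_trans ac cx) (lt_trans xd db).
have dqx : is_derive x 1 (derive1 q) (derive1n 2 q x).
  rewrite /= derive1E; apply: derivableP; apply: dq_derivable.
  exact: subset_itv_oo_co.
rewrite derive1E derive_val /GRing.scale /= (derive1_derive2_eq0 mu0 _ xab).
by rewrite addr0.
Qed.

Lemma q_neq0 : q a != 0 -> {in `[a, b[, forall t, q t != 0}.
Proof.
move=> qaN0 t tab; apply/eqP => qt0.
move: (tab); rewrite in_itv /= => /andP[a_le_t tb].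
have a_lt_t : a < t.
  by rewrite lt_def a_le_t andbT; apply: contraNneq qaN0 => <-; rewrite qt0.
have mu0 : mu = 0 by rewrite -(q_ode _ tab) qt0 expr0n mul0r.
have dqt0 : derive1 q t = 0.
  by apply: root_derive1_eq0 => //; rewrite in_itv /= a_lt_t.
have dq0 c : c \in `[a, t] -> derive1 q c = 0.
  rewrite in_itv /= => /andP[ac ct]; apply/eqP; rewrite -sqrf_eq0.
  by rewrite -(sqr_derive1_cst _ _ mu0 ac ct tb) dqt0 expr0n.
move/eqP: qaN0; apply; rewrite -qt0; apply/esym/derive1_eq0_cst.
- exact: ltW a_lt_t.
- move=> x; rewrite !in_itv /= => /andP[ax xt]; apply: q_derivable.
  by rewrite in_itv /= ax (le_lt_trans xt tb).
- move=> x; rewrite !in_itv /= => /andP[ax xt]; apply: dq0.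
  by rewrite in_itv /= !ltW.
Qed.

End nonvanishing.

Section separable.
Context {R : realType}.
Variables (q vphi : R -> R).

Lemma Phi_RE t r : Phi_R q vphi t r = q t * derive1 vphi r.
Proof. exact: derive1Ml_any. Qed.

Lemma Phi_tE t r : Phi_t q vphi t r = vphi r * derive1 q t.
Proof.
rewrite /Phi_t /Phi (_ : (fun s => q s * vphi r) = (fun s => vphi r * q s)).
  exact: derive1Ml_any.
by apply/funext => s; rewrite mulrC.
Qed.

Lemma Phi_ttE t r : Phi_tt q vphi t r = vphi r * derive1n 2 q t.
Proof.
rewrite /Phi_tt (_ : (fun s => Phi_t q vphi s r) = (fun s => vphi r * derive1 q s)).
  exact: derive1Ml_any.
by apply/funext => s; rewrite Phi_tE.
Qed.

Lemma LamE t r : Lam q vphi t r = q t * lam vphi r.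
Proof. by rewrite /Lam /lam; case: eqP => _; [exact: Phi_RE | rewrite mulrA]. Qed.

Lemma YfunE t : q t != 0 -> Yfun q vphi t =1 yfun vphi.
Proof.
by move=> qtN0 r; rewrite /Yfun Phi_RE LamE invfM mulrACA mulfV ?mul1r.
Qed.

Lemma derivable_Phi_in_t t r :
  derivable q t 1 -> derivable (fun s => Phi q vphi s r) t 1.
Proof.
move=> dq; rewrite (_ : (fun s => Phi q vphi s r) = vphi r \*: q).
  exact: derivableZ.
by apply/funext => s; rewrite /Phi mulrC.
Qed.

Lemma derivable_Phi_t_in_t t r :
  derivable (derive1 q) t 1 -> derivable (fun s => Phi_t q vphi s r) t 1.
Proof.
move=> ddq; rewrite (_ : (fun s => Phi_t q vphi s r) = vphi r \*: derive1 q).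
  exact: derivableZ.
by apply/funext => s; rewrite Phi_tE.
Qed.

Lemma flux_separable (k : R -> R) t : q t != 0 ->
  (fun s => s ^+ 4 / Phi q vphi t s * k (Yfun q vphi t s)) =
  (fun s => (q t)^-1 * (s ^+ 4 / vphi s * k (yfun vphi s))).
Proof.
move=> qtN0; apply/funext => s.
by rewrite YfunE // /Phi invfM mulrCA !mulrA.
Qed.

End separable.

Lemma separable_balance (F : fieldType) (a G rho mu Q qq v r rp dh gy : F) :
  Q != 0 -> r != 0 -> rp != 0 -> Q ^+ 2 * qq = mu ->
  v ^+ 2 / r ^+ 5 * dh + v / r ^+ 2 * gy =
    (a * G * rho + mu * (v / r) ^+ 3) * rp^-1 * v ->
  v * qq - rp * (1 / (r ^+ 2 * (Q * v)) * (Q^-1 * dh) + r / (Q * v) ^+ 2 * gy)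
    + a * r ^+ 3 * G * rho / (Q * v) ^+ 2 = 0.
Proof.
move=> QN0 rN0 rpN0 qq_mu ode; have [->|vN0] := eqVneq v 0.
  (* every term vanishes, since x / 0 = 0 *)
  by rewrite !(mul0r, mulr0, expr0n, invr0, addr0, subr0).
have -> : dh = ((a * G * rho + mu * (v / r) ^+ 3) * rp^-1 * v - v / r ^+ 2 * gy)
                * r ^+ 5 / v ^+ 2.
  by rewrite -ode; field; rewrite vN0 rN0.
by rewrite -qq_mu; field; rewrite vN0 QN0 rN0 rpN0.
Qed.

Theorem corollary1 (R : realType) (G rho : R) (W : 'M[R]_3 -> R)
  (T mu : R) (q vphi : R -> R) :
  0 < G -> 0 < rho ->
  (* hypotheses on W *)
  C1_on (@GLplus3 R) W ->
  (forall O F, SO3 O -> GLplus3 F -> W (O *m F) = W F) ->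
  (forall O F, SO3 O -> GLplus3 F -> W (F *m O) = W F) ->
  (forall (s : R) F, 0 < s -> GLplus3 F -> W (s *: F) = s^-1 * W F) ->
  W 1%:M = rho `^ (3^-1) ->
  0 < T ->
  (* q : [0,T) -> [0,oo) twice differentiable *)
  (forall t, 0 <= t < T ->
     0 <= q t /\ derivable q t 1 /\ derivable (derive1 q) t 1) ->
  (* varphi : [0,1] -> [0,oo) twice differentiable, varphi' > 0 *)
  (forall r, 0 <= r <= 1 ->
     0 <= vphi r /\ derivable vphi r 1 /\ derivable (derive1 vphi) r 1 /\
     0 < derive1 vphi r) ->
  vphi 0 = 0 -> derive1n 2 vphi 0 = 0 ->
  (* the ODE for varphi on (0,1] *)
  (forall r, 0 < r <= 1 ->
     let h := fun s => s ^+ 4 / vphi s * derive1 (gfun W rho) (yfun vphi s) in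
     derivable h r 1 /\
     vphi r ^+ 2 / r ^+ 5 * derive1 h r + vphi r / r ^+ 2 * gfun W rho (yfun vphi r)
     = (4 * pi / 3 * G * rho + mu * lam vphi r ^+ 3) * rho `^ (- 3^-1) * vphi r) ->
  derive1 (gfun W rho) (yfun vphi 1) = 0 ->
  vphi 1 = 1 ->
  (* the ODE for q *)
  (forall t, 0 <= t < T -> q t ^+ 2 * derive1n 2 q t = mu) ->
  q 0 = 1 ->
  (* conclusion: phi(t,R) = q(t) varphi(R) solves the Lagrangian system *)
  (forall t r, 0 <= t < T -> 0 < r <= 1 ->
     let H := fun s => s ^+ 4 / Phi q vphi t s
                       * derive1 (gfun W rho) (Yfun q vphi t s) in
     derivable (fun s => Phi q vphi s r) t 1 /\
     derivable (fun s => Phi_t q vphi s r) t 1 /\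
     derivable H r 1 /\
     Phi_tt q vphi t r
     - rho `^ (3^-1) * (1 / (r ^+ 2 * Phi q vphi t r) * derive1 H r
                        + r / Phi q vphi t r ^+ 2 * gfun W rho (Yfun q vphi t r))
     + 4 * pi / 3 * r ^+ 3 * G * rho / Phi q vphi t r ^+ 2 = 0) /\
  (forall t, 0 <= t < T -> derive1 (gfun W rho) (Yfun q vphi t 1) = 0).
Proof.
move=> _ rho_gt0 _ _ _ _ _ _ q_reg _ _ _ vphi_ode g'y1 _ q_ode q0.
have qN0 : forall t, 0 <= t < T -> q t != 0.
  move=> t tT; apply: (@q_neq0 _ 0 T mu) => [s|s|s|s||]; rewrite ?in_itv //=.
  - by move=> /q_reg[].
  - by move=> /q_reg[_ []].
  - by move=> /q_reg[_ []].
  - exact: q_ode.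
  - by rewrite q0 oner_neq0.
split=> [t r tT rI H|t tT]; last by rewrite YfunE // qN0.
have [_ [dq ddq]] := q_reg t tT.
have [dh ode] := vphi_ode r rI.
have rN0 : r != 0 by case/andP: rI => r_gt0 _; rewrite gt_eqF.
have qtN0 := qN0 t tT.
rewrite /H (flux_separable q vphi (derive1 (gfun W rho)) t qtN0).
split; first exact: derivable_Phi_in_t.
split; first exact: derivable_Phi_t_in_t.
split; first exact: derivableZ.
rewrite derive1Ml // Phi_ttE YfunE // /Phi.
have rpN0 : rho `^ 3^-1 != 0 by rewrite gt_eqF // powR_gt0.
apply: separable_balance => //.
by rewrite q_ode // ode /lam (negbTE rN0) powRN.
Qed.
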